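(* In the ALOHA network described below with a fixed transmit probability $p\in(0,1)$, consider the normalized mean local delay $\frac{\widetilde{D}(p)}{\log_2(1+\theta)}$ as a function of the SINR threshold $\theta>0$, and let $\theta_{\mathrm{opt}}$ denote its minimizer. (i) In the noise-limited regime (interference neglected, i.e. $\widetilde{D}(p)=\frac1p\exp(\theta r_0^\alpha WN_0)$), $$\theta_{\mathrm{opt}}=\exp\left(\mathcal{W}\left(\frac{1}{r_0^{\alpha}WN_0}\right)\right)-1,$$ where $\mathcal{W}$ is the Lambert $\mathcal{W}$ function, i.e. $\mathcal{W}(z)e^{\mathcal{W}(z)}=z$. (ii) In the interference-limited regime (noise neglected, $N_0=0$), $$\theta_{\mathrm{opt}}\in\left(b_0^{-1/(\delta+1)}-1,\ b_0^{-1/\delta}\right),\qquad b_0=\lambda c_d r_0^d\delta C(\delta)p(1-p)^{\delta-1}.$$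
   Context: Model: transmitters form a homogeneous Poisson point process $\Phi$ of intensity $\lambda>0$ in $\mathbb{R}^d$; the typical receiver is at the origin and its desired transmitter $x_0\in\Phi$ is at distance $r_0>0$; probabilities are under the Palm distribution at $x_0$. Time is slotted. Path loss $\kappa r^{-\alpha}$ with $\alpha>d$, $\delta=d/\alpha\in(0,1)$. Power fading coefficients $h_{k,x}$ are i.i.d. exponential with mean $1$ over transmitters and slots, independent of everything. Unit power, always backlogged transmitters. Bandwidth $W$, noise power spectral density $N_r$, $N_0=N_r/\kappa$, SINR threshold $\theta>0$. $c_d$ is the volume of the unit ball in $\mathbb{R}^d$, $C(\delta)=\Gamma(1+\delta)\Gamma(1-\delta)=\frac{\pi\delta}{\sin(\pi\delta)}$. ALOHA with transmit probability $p$: each transmitter (including $x_0$) is independently active in each slot with probability $p$; $\Phi_k$ is the active set in slot $k$; $\mathrm{SINR}_k=\frac{h_{k,x_0}r_0^{-\alpha}}{WN_0+\sum_{x\in\Phi\setminus\{x_0\}}h_{k,x}|x|^{-\alpha}\mathbf{1}(x\in\Phi_k)}$; a slot is successful if $x_0$ is active and $\mathrm{SINR}_k>\theta$; the local delay is the number of slots until the first success and $\widetilde{D}(p)$ (depending on $\theta$) is its mean, which equals $\frac1p\exp\left(\frac{p\lambda c_d r_0^d\theta^\delta C(\delta)}{(1-p)^{1-\delta}}+\theta r_0^\alpha WN_0\right)$. The normalization by $\log_2(1+\theta)$ accounts for slot duration proportional to $1/\log_2(1+\theta)$. *)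

From Stdlib Require Import Reals Lra.
Open Scope R_scope.

(* Volume c_d of the unit ball in R^d, via the classical recursion
   c_0 = 1, c_1 = 2, c_d = (2 pi / d) c_(d-2)
   (equivalently pi^(d/2) / Gamma(d/2 + 1)). *)
Fixpoint unit_ball_volume (d : nat) : R :=
  match d with
  | O => 1
  | S O => 2
  | S (S k as m) => 2 * PI / INR (S m) * unit_ball_volume k
  end.

(* C(delta) = Gamma(1+delta) Gamma(1-delta) = pi delta / sin(pi delta). *)
Definition Cdelta (delta : R) : R := PI * delta / sin (PI * delta).

Definition mean_local_delay (d : nat) (alpha lam r0 W N0 p theta : R) : R :=
  let delta := INR d / alpha in
  / p * exp (p * lam * unit_ball_volume d * r0 ^ d * Rpower theta delta
               * Cdelta delta / Rpower (1 - p) (1 - delta)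
             + theta * Rpower r0 alpha * W * N0).

Definition normalized_delay (d : nat) (alpha lam r0 W N0 p theta : R) : R :=
  mean_local_delay d alpha lam r0 W N0 p theta / (ln (1 + theta) / ln 2).

Definition is_minimizer (f : R -> R) (t : R) : Prop :=
  0 < t /\ forall theta, 0 < theta -> f t <= f theta.

From Stdlib Require Import Reals Lra Lia.
Open Scope R_scope.

(* The normalized delay is (ln 2 / p) exp (H theta) with
   H theta = K theta^delta + a theta - ln (ln (1 + theta)), so both parts are
   statements about the minimizers of H.  Without interference (K = 0), the
   concave map theta |-> ln (ln (1 + theta)) has slope 1 / (w e^w) = a at
   e^w - 1, hence lies strictly below its tangent there and e^w - 1 is the
   unique minimizer.  Without noise (a = 0), H tends to +oo at 0 and at +oo,
   so a minimizer t exists, and Fermat's rule gives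
   K delta t^(delta - 1) ln (1 + t) (1 + t) = 1; bracketing ln (1 + t) between
   t / (1 + t) and t turns this into K delta t^delta < 1 < K delta (1 + t)^(delta + 1). *)

Lemma ln_le_ln x y : 0 < x -> x <= y -> ln x <= ln y.
Proof.
  intros Hx [Hxy | <-]; [left; exact (ln_increasing x y Hx Hxy) | lra].
Qed.

Lemma ln_le_sub1 x : 0 < x -> ln x <= x - 1.
Proof.
  intros Hx. pose proof (exp_ineq1_le (ln x)) as E. rewrite exp_ln in E; lra.
Qed.

Lemma ln_lt_sub1 x : 0 < x -> x <> 1 -> ln x < x - 1.
Proof.
  intros Hx Hx1. assert (Hl : ln x <> 0).
  { intros E. apply Hx1. rewrite <- (exp_ln x Hx), E. exact exp_0. }
  pose proof (exp_ineq1 (ln x) Hl) as E. rewrite exp_ln in E; lra.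
Qed.

Lemma ln_div x y : 0 < x -> 0 < y -> ln (y / x) = ln y - ln x.
Proof.
  intros Hx Hy. unfold Rdiv.
  rewrite ln_mult, ln_Rinv; [ring | lra | lra | apply Rinv_0_lt_compat; lra].
Qed.

Lemma ln_1p_pos x : 0 < x -> 0 < ln (1 + x).
Proof. intros Hx. rewrite <- ln_1. apply ln_increasing; lra. Qed.

Lemma ln_1p_lt x : 0 < x -> ln (1 + x) < x.
Proof. intros Hx. pose proof (ln_lt_sub1 (1 + x)); lra. Qed.

Lemma lt_ln_1p_mul x : 0 < x -> x < ln (1 + x) * (1 + x).
Proof.
  intros Hx.
  assert (Hinv : 0 < / (1 + x) < 1).
  { split; [apply Rinv_0_lt_compat; lra|].
    rewrite <- Rinv_1. apply Rinv_lt_contravar; nra. }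
  pose proof (ln_lt_sub1 (/ (1 + x)) ltac:(lra) ltac:(lra)) as E.
  rewrite ln_Rinv in E by lra.
  apply Rmult_lt_compat_r with (r := 1 + x) in E; [|lra].
  replace ((/ (1 + x) - 1) * (1 + x)) with (- x) in E by (field; lra). lra.
Qed.

Lemma exp_ge_sqr_div4 y : 0 <= y -> y * y / 4 <= exp y.
Proof.
  intros Hy. replace y with (y / 2 + y / 2) at 3 by field. rewrite exp_plus.
  pose proof (exp_ineq1_le (y / 2)). nra.
Qed.

Lemma exp_dominates_affine K d C : 0 < K -> 0 < d ->
  exists U, 1 <= U /\ forall u, U <= u -> C + u <= K * exp (d * u).
Proof.
  intros HK Hd.
  set (c := K * (d * d) / 4).
  assert (Hc : 0 < c)
    by (unfold c; apply Rdiv_lt_0_compat; [apply Rmult_lt_0_compat; nra | lra]).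
  exists (Rmax 1 ((Rabs C + 1) / c)). split; [apply Rmax_l|].
  intros u Hu.
  pose proof (Rmax_l 1 ((Rabs C + 1) / c)) as Hu1.
  pose proof (Rmax_r 1 ((Rabs C + 1) / c)) as Hu2.
  assert (HcU : Rabs C + 1 <= c * u).
  { replace (Rabs C + 1) with (c * ((Rabs C + 1) / c)) by (field; lra).
    apply Rmult_le_compat_l; lra. }
  pose proof (exp_ge_sqr_div4 (d * u) ltac:(nra)).
  pose proof (Rle_abs C). pose proof (Rabs_pos C).
  assert (c * u * u <= K * exp (d * u)) by (unfold c; nra).
  nra.
Qed.

Lemma exp_sub_ln y z : 0 < z -> exp (y - ln z) = exp y / z.
Proof.
  intros Hz. unfold Rminus, Rdiv. rewrite exp_plus, exp_Ropp, exp_ln by exact Hz.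
  reflexivity.
Qed.

Lemma Rpower_pos x e : 0 < Rpower x e.
Proof. apply exp_pos. Qed.

Lemma Rpower_add1 x e : 0 < x -> Rpower x (e + 1) = Rpower x e * x.
Proof. intros Hx. rewrite Rpower_plus, Rpower_1 by exact Hx. reflexivity. Qed.

Lemma ln_mul_Rpower B y e : 0 < B -> ln (B * Rpower y e) = ln B + e * ln y.
Proof. intros HB. rewrite ln_mult, ln_Rpower; auto using Rpower_pos. Qed.

Lemma ln_Rpower_opp_inv B e : 0 < e -> e * ln (Rpower B (- / e)) = - ln B.
Proof. intros He. rewrite ln_Rpower. field. lra. Qed.

Lemma lt_root_of_mul_Rpower_lt1 B e y : 0 < B -> 0 < e -> 0 < y ->
  B * Rpower y e < 1 -> y < Rpower B (- / e).
Proof.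
  intros HB He Hy H.
  assert (Hln : ln (B * Rpower y e) < 0).
  { rewrite <- ln_1. apply ln_increasing; [|exact H].
    apply Rmult_lt_0_compat; [exact HB | apply Rpower_pos]. }
  rewrite ln_mul_Rpower in Hln by exact HB.
  apply ln_lt_inv; [exact Hy | apply Rpower_pos|].
  apply Rmult_lt_reg_l with e; [exact He|]. rewrite ln_Rpower_opp_inv; lra.
Qed.

Lemma root_lt_of_mul_Rpower_gt1 B e y : 0 < B -> 0 < e -> 0 < y ->
  1 < B * Rpower y e -> Rpower B (- / e) < y.
Proof.
  intros HB He Hy H.
  assert (Hln : 0 < ln (B * Rpower y e)) by (rewrite <- ln_1; apply ln_increasing; lra).
  rewrite ln_mul_Rpower in Hln by exact HB.
  apply ln_lt_inv; [apply Rpower_pos | exact Hy|].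
  apply Rmult_lt_reg_l with e; [exact He|]. rewrite ln_Rpower_opp_inv; lra.
Qed.

Lemma is_minimizer_scale_exp (g f : R -> R) c : 0 < c ->
  (forall x, 0 < x -> g x = c * exp (f x)) ->
  forall t, is_minimizer g t <-> is_minimizer f t.
Proof.
  intros Hc Hgf t.
  assert (Hmono : forall x y, 0 < x -> 0 < y -> g x <= g y <-> f x <= f y).
  { intros x y Hx Hy. rewrite !Hgf by assumption. split; intros H.
    - destruct (Rle_dec (f x) (f y)) as [|Hn]; [assumption|].
      assert (exp (f y) < exp (f x)) by (apply exp_increasing; lra).
      assert (c * exp (f y) < c * exp (f x)) by (apply Rmult_lt_compat_l; lra). lra.
    - apply Rmult_le_compat_l; [lra|]. destruct H as [H | ->]; [|lra].
      left. apply exp_increasing, H. }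
  unfold is_minimizer. split; intros [Ht Hm]; split; try exact Ht;
    intros x Hx; apply Hmono; auto.
Qed.

Lemma derivable_pt_lim_zero_at_minimizer f t l :
  is_minimizer f t -> derivable_pt_lim f t l -> l = 0.
Proof.
  intros [Ht Hm] Hd.
  change l with (derive_pt f t (exist _ l Hd)).
  apply (deriv_minimum f 0 (t + 1) t); try lra.
  intros x Hx _. apply Hm, Hx.
Qed.

Lemma is_minimizer_of_coercive f a b : 0 < a <= 1 -> 1 <= b ->
  (forall x, a <= x <= b -> continuity_pt f x) ->
  (forall x, 0 < x <= a -> f 1 <= f x) ->
  (forall x, b <= x -> f 1 <= f x) ->
  exists t, is_minimizer f t.
Proof.
  intros Ha Hb Hcont Hsmall Hlarge.
  destruct (continuity_ab_min f a b ltac:(lra) Hcont) as [m [Hm Hmab]].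
  assert (Hm1 : f m <= f 1) by (apply Hm; lra).
  exists m. split; [lra|]. intros x Hx.
  destruct (Rle_dec x a) as [Hxa|Hxa]; [pose proof (Hsmall x (conj Hx Hxa)); lra|].
  destruct (Rle_dec b x) as [Hbx|Hbx]; [pose proof (Hlarge x Hbx); lra|].
  apply Hm; lra.
Qed.

(* ln (normalized delay) - ln (ln 2 / p): K is the interference and a the noise
   coefficient. *)
Definition log_delay (K delta a x : R) : R :=
  K * Rpower x delta + a * x - ln (ln (1 + x)).

Lemma derivable_pt_lim_lnln_1p x : 0 < x ->
  derivable_pt_lim (fun y => ln (ln (1 + y))) x (/ ln (1 + x) * / (1 + x)).
Proof.
  intros Hx.
  assert (D1 : derivable_pt_lim (fun y => 1 + y) x 1).
  { pose proof (derivable_pt_lim_plus (fct_cte 1) id x 0 1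
      (derivable_pt_lim_const 1 x) (derivable_pt_lim_id x)) as D.
    rewrite Rplus_0_l in D. exact D. }
  assert (D2 : derivable_pt_lim (fun y => ln (1 + y)) x (/ (1 + x))).
  { pose proof (derivable_pt_lim_comp (fun y => 1 + y) ln x 1 (/ (1 + x)) D1
      (derivable_pt_lim_ln (1 + x) ltac:(lra))) as D.
    rewrite Rmult_1_r in D. exact D. }
  exact (derivable_pt_lim_comp (fun y => ln (1 + y)) ln x _ _ D2
    (derivable_pt_lim_ln _ (ln_1p_pos x Hx))).
Qed.

Lemma derivable_pt_lim_log_delay K delta a x : 0 < x ->
  derivable_pt_lim (log_delay K delta a) x
    (K * (delta * Rpower x (delta - 1)) + a - / ln (1 + x) * / (1 + x)).
Proof.
  intros Hx. unfold log_delay.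
  apply (derivable_pt_lim_minus (fun y => K * Rpower y delta + a * y)).
  - apply (derivable_pt_lim_plus (fun y => K * Rpower y delta) (fun y => a * y)).
    + apply (derivable_pt_lim_scal (fun y => Rpower y delta)).
      exact (derivable_pt_lim_power x delta Hx).
    + pose proof (derivable_pt_lim_scal id a x 1 (derivable_pt_lim_id x)) as D.
      rewrite Rmult_1_r in D. exact D.
  - exact (derivable_pt_lim_lnln_1p x Hx).
Qed.

Lemma lnln_1p_lt_tangent w x : 0 < w -> 0 < x -> x <> exp w - 1 ->
  ln (ln (1 + x)) - ln w < (x - (exp w - 1)) / (w * exp w).
Proof.
  intros Hw Hx Hne.
  pose proof (exp_pos w) as Hew. pose proof (ln_1p_pos x Hx) as HL.
  assert (Houter : ln (ln (1 + x)) - ln w <= (ln (1 + x) - w) / w).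
  { rewrite <- ln_div by assumption.
    replace ((ln (1 + x) - w) / w) with (ln (1 + x) / w - 1) by (field; lra).
    apply ln_le_sub1, Rdiv_lt_0_compat; assumption. }
  assert (Hinner : ln (1 + x) - w < (x - (exp w - 1)) / exp w).
  { replace (ln (1 + x) - w) with (ln ((1 + x) / exp w))
      by (rewrite ln_div, ln_exp; lra).
    replace ((x - (exp w - 1)) / exp w) with ((1 + x) / exp w - 1) by (field; lra).
    apply ln_lt_sub1; [apply Rdiv_lt_0_compat; lra|].
    intros E. apply Hne. field_simplify_eq in E; lra. }
  replace ((x - (exp w - 1)) / (w * exp w)) with ((x - (exp w - 1)) / exp w / w)
    by (field; lra).
  apply Rle_lt_trans with (1 := Houter).
  apply Rmult_lt_compat_r; [apply Rinv_0_lt_compat, Hw | exact Hinner].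
Qed.

Lemma log_delay_noise_minimizer delta a w : 0 < a -> w * exp w = / a ->
  forall t, is_minimizer (log_delay 0 delta a) t <-> t = exp w - 1.
Proof.
  intros Ha Hw t.
  pose proof (exp_pos w) as Hew.
  assert (Hwpos : 0 < w).
  { destruct (Rlt_le_dec 0 w) as [|Hw0]; [assumption|].
    pose proof (Rinv_0_lt_compat a Ha). nra. }
  assert (Ha_eq : a = / (w * exp w)) by (rewrite Hw; field; lra).
  set (t0 := exp w - 1).
  assert (Ht0 : 0 < t0) by (pose proof (exp_ineq1 w ltac:(lra)); unfold t0; lra).
  assert (Hf0 : log_delay 0 delta a t0 = a * t0 - ln w).
  { unfold log_delay, t0. replace (1 + (exp w - 1)) with (exp w) by ring.
    rewrite ln_exp. ring. }
  assert (Hstrict : forall x, 0 < x -> x <> t0 ->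
            log_delay 0 delta a t0 < log_delay 0 delta a x).
  { intros x Hx Hne. rewrite Hf0.
    pose proof (lnln_1p_lt_tangent w x Hwpos Hx Hne) as T.
    unfold log_delay. rewrite Ha_eq. unfold Rdiv in T. fold t0 in T. nra. }
  split.
  - intros [Ht Hm]. destruct (Req_dec t t0) as [|Hne]; [assumption|].
    pose proof (Hm t0 Ht0). pose proof (Hstrict t Ht Hne). lra.
  - intros ->. split; [exact Ht0|]. intros x Hx.
    destruct (Req_dec x t0) as [-> | Hne]; [lra|].
    left. exact (Hstrict x Hx Hne).
Qed.

Lemma lnln_1p_le_ln x : 0 < x -> ln (ln (1 + x)) <= ln x.
Proof.
  intros Hx. apply ln_le_ln; [apply ln_1p_pos, Hx | left; apply ln_1p_lt, Hx].
Qed.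

Lemma lnln_1p_le_ln2_add_ln x : 1 <= x -> ln (ln (1 + x)) <= ln 2 + ln x.
Proof.
  intros Hx. rewrite <- ln_mult by lra.
  apply Rle_trans with (ln (1 + x)).
  - pose proof (ln_le_sub1 (ln (1 + x)) (ln_1p_pos x ltac:(lra))). lra.
  - apply ln_le_ln; lra.
Qed.

Lemma log_delay_has_minimizer K delta a : 0 < K -> 0 < delta -> 0 <= a ->
  exists t, is_minimizer (log_delay K delta a) t.
Proof.
  intros HK Hd Ha.
  set (M := log_delay K delta a 1).
  destruct (exp_dominates_affine K delta (M + ln 2) HK Hd) as [U [HU1 HU]].
  pose proof (exp_ineq1_le U) as HeU.
  set (A := Rmin 1 (exp (- M))).
  assert (HA : 0 < A) by (apply Rmin_pos; [lra | apply exp_pos]).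
  apply (is_minimizer_of_coercive _ A (exp U)).
  - split; [exact HA | apply Rmin_l].
  - lra.
  - intros x Hx. apply derivable_continuous_pt.
    eexists. apply derivable_pt_lim_log_delay. lra.
  - intros x [Hx HxA].
    assert (HlnA : ln x <= - M).
    { rewrite <- (ln_exp (- M)). apply ln_le_ln; [exact Hx|].
      apply Rle_trans with (1 := HxA), Rmin_r. }
    pose proof (lnln_1p_le_ln x Hx).
    pose proof (Rpower_pos x delta).
    unfold log_delay at 2. fold M. nra.
  - intros x Hx.
    assert (HlnU : U <= ln x)
      by (rewrite <- (ln_exp U); apply ln_le_ln; [apply exp_pos | exact Hx]).
    pose proof (HU (ln x) HlnU) as Hdom.
    pose proof (lnln_1p_le_ln2_add_ln x ltac:(lra)).
    unfold log_delay at 2. unfold Rpower. fold M. nra.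
Qed.

Lemma log_delay_stationary K delta t : is_minimizer (log_delay K delta 0) t ->
  K * delta * Rpower t (delta - 1) * (ln (1 + t) * (1 + t)) = 1.
Proof.
  intros Hmin. pose proof (proj1 Hmin) as Ht. pose proof (ln_1p_pos t Ht).
  pose proof (derivable_pt_lim_zero_at_minimizer _ _ _ Hmin
                (derivable_pt_lim_log_delay K delta 0 t Ht)) as E.
  apply Rminus_diag_uniq in E.
  replace (K * delta * Rpower t (delta - 1))
    with (K * (delta * Rpower t (delta - 1)) + 0) by ring.
  rewrite E. field. lra.
Qed.

Lemma log_delay_minimizer_bounds K delta t : 0 < K -> 0 < delta ->
  is_minimizer (log_delay K delta 0) t ->
  Rpower (K * delta) (- / (delta + 1)) - 1 < t /\ t < Rpower (K * delta) (- / delta).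
Proof.
  intros HK Hd Hmin.
  pose proof (proj1 Hmin) as Ht. pose proof (log_delay_stationary _ _ _ Hmin) as E.
  pose proof (ln_1p_pos t Ht) as HL.
  pose proof (ln_1p_lt t Ht) as HLt. pose proof (lt_ln_1p_mul t Ht) as HLgt.
  assert (HB : 0 < K * delta) by nra.
  assert (Hq : 0 < K * delta * Rpower t (delta - 1))
    by (apply Rmult_lt_0_compat; [exact HB | apply Rpower_pos]).
  assert (Htd : Rpower t delta = Rpower t (delta - 1) * t).
  { replace delta with ((delta - 1) + 1) at 1 by ring. apply Rpower_add1, Ht. }
  split.
  - assert (Hlt : 1 < K * delta * Rpower (1 + t) (delta + 1)).
    { rewrite Rpower_add1 by lra. rewrite <- E at 1.
      assert (Hpow : Rpower t delta < Rpower (1 + t) delta) by (apply Rlt_Rpower_l; lra).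
      apply Rlt_trans with (K * delta * (Rpower t delta * (1 + t))).
      - rewrite Htd. replace (K * delta * (Rpower t (delta - 1) * t * (1 + t)))
          with (K * delta * Rpower t (delta - 1) * (t * (1 + t))) by ring.
        apply Rmult_lt_compat_l; [exact Hq | nra].
      - apply Rmult_lt_compat_l, Rmult_lt_compat_r; [exact HB | lra | exact Hpow]. }
    pose proof (root_lt_of_mul_Rpower_gt1 (K * delta) (delta + 1) (1 + t)
                  HB ltac:(lra) ltac:(lra) Hlt).
    lra.
  - apply lt_root_of_mul_Rpower_lt1; [exact HB | exact Hd | exact Ht |].
    rewrite <- E, Htd, <- Rmult_assoc.
    apply Rmult_lt_compat_l; [exact Hq | exact HLgt].
Qed.

Lemma unit_ball_volume_pos n : 0 < unit_ball_volume n.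
Proof.
  enough (H : 0 < unit_ball_volume n /\ 0 < unit_ball_volume (S n)) by apply H.
  induction n as [|n [IH1 IH2]]; [simpl; lra|]. split; [exact IH2|].
  change (0 < 2 * PI / INR (S (S n)) * unit_ball_volume n).
  pose proof PI_RGT_0. pose proof (lt_0_INR (S (S n)) ltac:(lia)).
  apply Rmult_lt_0_compat; [apply Rdiv_lt_0_compat; lra | exact IH1].
Qed.

Lemma Cdelta_pos delta : 0 < delta < 1 -> 0 < Cdelta delta.
Proof.
  intros Hd. pose proof PI_RGT_0. unfold Cdelta.
  apply Rdiv_lt_0_compat; [nra | apply sin_gt_0; nra].
Qed.

Lemma INR_div_in_unit_interval n alpha : (1 <= n)%nat -> INR n < alpha ->
  0 < INR n / alpha < 1.
Proof.
  intros Hn Halpha. pose proof (le_INR 1 n Hn) as H1. simpl in H1. split.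
  - apply Rdiv_lt_0_compat; lra.
  - apply Rmult_lt_reg_r with alpha; [lra|].
    unfold Rdiv. rewrite Rmult_assoc, Rinv_l; lra.
Qed.

Lemma is_minimizer_normalized_delay d alpha lam r0 W N0 p : 0 < p ->
  let delta := INR d / alpha in
  let K := p * lam * unit_ball_volume d * r0 ^ d * Cdelta delta
           / Rpower (1 - p) (1 - delta) in
  forall t, is_minimizer (normalized_delay d alpha lam r0 W N0 p) t
            <-> is_minimizer (log_delay K delta (Rpower r0 alpha * W * N0)) t.
Proof.
  intros Hp delta K. pose proof ln_lt_2.
  apply is_minimizer_scale_exp with (c := ln 2 / p); [apply Rdiv_lt_0_compat; lra|].
  intros x Hx. pose proof (ln_1p_pos x Hx).
  unfold normalized_delay, mean_local_delay, log_delay. fold delta.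
  rewrite exp_sub_ln by assumption.
  match goal with |- _ * exp ?E / _ = _ * (exp ?F / _) =>
    replace F with E by (unfold K, Rdiv; ring) end.
  field. lra.
Qed.

Theorem theorem8 :
  forall (d : nat) (alpha lam r0 W Nr kappa p : R),
    (1 <= d)%nat -> INR d < alpha ->
    0 < lam -> 0 < r0 -> 0 < W -> 0 < Nr -> 0 < kappa -> 0 < p < 1 ->
    (forall w : R, w * exp w = / (Rpower r0 alpha * W * (Nr / kappa)) ->
       forall t : R,
         is_minimizer (normalized_delay d alpha 0 r0 W (Nr / kappa) p) t
         <-> t = exp w - 1)
    /\
    (let delta := INR d / alpha in
     let b0 := lam * unit_ball_volume d * r0 ^ d * delta * Cdelta delta * p
               * Rpower (1 - p) (delta - 1) in
     (exists t, is_minimizer (normalized_delay d alpha lam r0 W 0 p) t) /\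
     forall t : R,
       is_minimizer (normalized_delay d alpha lam r0 W 0 p) t ->
       Rpower b0 (- / (delta + 1)) - 1 < t /\ t < Rpower b0 (- / delta)).
Proof.
  intros d alpha lam r0 W Nr kappa p Hd Hda Hlam Hr0 HW HNr Hk Hp.
  split.
  - intros w Hw t. rewrite is_minimizer_normalized_delay by lra.
    rewrite Rmult_0_r, !Rmult_0_l, Rdiv_0_l.
    apply log_delay_noise_minimizer; [|exact Hw].
    pose proof (Rpower_pos r0 alpha). pose proof (Rdiv_lt_0_compat Nr kappa HNr Hk).
    apply Rmult_lt_0_compat; [apply Rmult_lt_0_compat|]; assumption.
  - intros delta b0.
    pose proof (INR_div_in_unit_interval d alpha Hd Hda) as Hdelta. fold delta in Hdelta.
    set (K := p * lam * unit_ball_volume d * r0 ^ d * Cdelta delta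
              / Rpower (1 - p) (1 - delta)).
    assert (HK : 0 < K).
    { pose proof (unit_ball_volume_pos d). pose proof (pow_lt r0 d Hr0).
      pose proof (Cdelta_pos delta Hdelta). pose proof (Rpower_pos (1 - p) (1 - delta)).
      unfold K. apply Rdiv_lt_0_compat; [apply Rmult_lt_0_compat|]; try assumption.
      repeat apply Rmult_lt_0_compat; lra. }
    assert (Hb0 : b0 = K * delta).
    { unfold b0, K. replace (delta - 1) with (- (1 - delta)) by ring.
      rewrite Rpower_Ropp. field. apply Rgt_not_eq, Rpower_pos. }
    assert (Hmin : forall t, is_minimizer (normalized_delay d alpha lam r0 W 0 p) t
                             <-> is_minimizer (log_delay K delta 0) t).
    { intros t. rewrite is_minimizer_normalized_delay by lra. rewrite !Rmult_0_r.
      reflexivity. }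
    rewrite Hb0. split.
    + destruct (log_delay_has_minimizer K delta 0 HK ltac:(lra) ltac:(lra)) as [t Ht].
      exists t. apply Hmin, Ht.
    + intros t Ht. apply log_delay_minimizer_bounds; [exact HK | lra | apply Hmin, Ht].
Qed.
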